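(* Let $G_1$ be a group and $k\ge1$ an integer such that $|G_1:C_{G_1}(a)|\le k$ for every $a\in G_1$. Let $n,m\ge0$, let $G\le G_1^n$ be a subgroup, and let $\mu$ be a left-invariant probability measure on some algebra of subsets of $G$, with inner measure $\mu_*$. Let $w(\bar x,\bar y)$ be a group word in the variables $\bar x=(x_1,\dots,x_n)$, $\bar y=(y_1,\dots,y_m)$ and their inverses, and let $\bar g\in G_1^m$, $c\in G_1$. If $w(\bar h,\bar g)=c$ does not hold for all $\bar h\in G$, then $$\mu_*(\{\bar h\in G:w(\bar h,\bar g)=c\})\le1-\frac1{2k^{n^2+mn}}.$$
   Context: The inner measure is $\mu_*(X)=\sup\{\mu(Y):Y\subseteq X\text{ measurable}\}$. *)

From HB Require Import structures.
From mathcomp Require Import all_boot all_order all_algebra.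
From mathcomp Require Import monoid.
From mathcomp Require Import boolp classical_sets reals.

Set Implicit Arguments.
Unset Strict Implicit.
Unset Printing Implicit Defensive.

Import Order.TTheory GRing.Theory Num.Theory.
Local Open Scope classical_set_scope.

Section Defs.
Variable G1 : groupType.

Definition in_centralizer (a x : G1) : Prop := (x * a = a * x)%g.

(** [|G1 : C_{G1}(a)| <= k]: the left cosets of [C_{G1}(a)] can be listed
    by (at most) [k] representatives, i.e. every [x] lies in some coset
    [t i * C_{G1}(a)]. *)
Definition centralizer_index_le (k : nat) (a : G1) : Prop :=
  exists t : 'I_k -> G1, forall x : G1,
    exists i : 'I_k, in_centralizer a ((t i)^-1 * x)%g.

Definition is_subgroup_pow (n : nat) (G : set ('I_n -> G1)) : Prop :=
  [/\ G (fun _ => 1%g),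
      (forall h h', G h -> G h' -> G (fun i => h i * h' i)%g) &
      (forall h, G h -> G (fun i => (h i)^-1)%g)].

Definition ltrans (n : nat) (g : 'I_n -> G1) (X : set ('I_n -> G1)) :
  set ('I_n -> G1) := [set (fun i => g i * h i)%g | h in X].

(** Group words in the variables x_1..x_n (inl), y_1..y_m (inr) and their
    inverses: a letter is (variable, inverted?). *)
Definition word (n m : nat) := seq (('I_n + 'I_m) * bool).

Definition eval_word (n m : nat) (w : word n m) (h : 'I_n -> G1)
    (g : 'I_m -> G1) : G1 :=
  foldr (fun l acc =>
     let v := match l.1 with inl i => h i | inr j => g j end in
     ((if l.2 then v^-1 else v) * acc)%g) 1%g w.
End Defs.

Section Measure.
Variable R : realType.
Local Open Scope ring_scope.

(** [mu] is a (finitely additive) left-invariant probability measure on the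
    algebra [A] of subsets of [G] (subsets of [G] are modelled as subsets of
    the ambient [G1^n] contained in [G]; complements are taken in [G]). *)
Record left_inv_prob_measure (G1 : groupType) (n : nat)
    (G : set ('I_n -> G1)) (A : set (set ('I_n -> G1)))
    (mu : set ('I_n -> G1) -> R) : Prop := {
  alg_sub : forall X, A X -> X `<=` G;
  alg_set0 : A set0;
  alg_setT : A G;
  alg_compl : forall X, A X -> A (G `\` X);
  alg_union : forall X Y, A X -> A Y -> A (X `|` Y);
  alg_ltrans : forall g X, G g -> A X -> A (ltrans g X);
  mu_ge0 : forall X, A X -> 0 <= mu X;
  mu_additive : forall X Y, A X -> A Y -> X `&` Y = set0 ->
                  mu (X `|` Y) = mu X + mu Y;
  mu_total : mu G = 1;
  mu_linv : forall g X, G g -> A X -> mu (ltrans g X) = mu X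
}.

Definition inner_measure (T : Type) (A : set (set T)) (mu : set T -> R)
    (X : set T) : R :=
  sup [set r | exists Y, [/\ A Y, Y `<=` X & mu Y = r]].
End Measure.

From mathcomp Require Import all_boot all_order all_algebra.
From mathcomp Require Import monoid.
From mathcomp Require Import boolp classical_sets reals.
From mathcomp Require Import lra.
Set Implicit Arguments.
Unset Strict Implicit.
Unset Printing Implicit Defensive.
Import Order.TTheory GRing.Theory Num.Theory.

(* If w(., g) is constant on G, the fibre is empty.  Otherwise pick b in G
   with w(b, g) <> w(1, g).  As every centralizer has index at most k, G is
   covered by k^(n(n+m)) left translates r U, where U is the set of tuples
   whose coordinates centralize all b_j and g_j.  For u in U,
   w(bu, g) = w(b, g) w(u, 1) and w(u, g) = w(1, g) w(u, 1), so u and bu are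
   not both in a measurable Y inside the fibre: writing h = r u = (r b^-1)(b u)
   shows that G is covered by 2 k^(n(n+m)) left translates of G \ Y, and left
   invariance gives 1 <= 2 k^(n(n+m)) (1 - mu Y). *)

Section Words.
Variable G1 : groupType.
Local Open Scope group_scope.

Lemma commuteVl (x y : G1) : commute x y -> commute x^-1 y.
Proof. by move=> cxy; apply/commute_sym/commuteV/commute_sym. Qed.

Lemma commute_eval_word n m (z : G1) (w : word n m) a g :
  (forall i, commute z (a i)) -> (forall j, commute z (g j)) ->
  commute z (eval_word w a g).
Proof.
move=> za zg; elim: w => [|[[i|j] [|]] w IH]; first exact: commute1.
all: rewrite /eval_word /= -/(eval_word _ _ _); apply: commuteM => //.
all: exact: commuteV.
Qed.

Lemma eval_word_mulr n m (w : word n m) (a u : 'I_n -> G1) g :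
  (forall i j, commute (u i) (a j)) -> (forall i j, commute (u i) (g j)) ->
  eval_word w (fun i => a i * u i) g =
  eval_word w a g * eval_word w u (fun _ => 1).
Proof.
move=> ua ug; elim: w => [|[[i|j] b] w IH]; first by rewrite /eval_word /= mulg1.
all: rewrite /eval_word /= -!/(eval_word _ _ _) IH.
- have uw : commute (if b then (u i)^-1 else u i) (eval_word w a g).
    by case: b; [apply: commuteVl|]; apply: commute_eval_word.
  have -> : (if b then (a i * u i)^-1 else a i * u i) =
            (if b then (a i)^-1 else a i) * (if b then (u i)^-1 else u i).
    by case: {uw}b => //; rewrite invgM; apply/commuteVl/commuteV/ua.
  by rewrite !mulgA -(mulgA _ _ (eval_word w a g)) uw mulgA.
- by rewrite mulgA; case: b; rewrite ?invg1 mul1g.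
Qed.

Lemma eval_word_centralized_neq n m (w : word n m) (b u : 'I_n -> G1) g :
  (forall i j, commute (u i) (b j)) -> (forall i j, commute (u i) (g j)) ->
  eval_word w b g <> eval_word w (fun _ => 1) g ->
  eval_word w (fun i => b i * u i) g <> eval_word w u g.
Proof.
move=> ub ug bg1 e; apply: bg1; apply: (mulIg (eval_word w u (fun _ => 1))).
have -> : eval_word w (fun _ => 1) g * eval_word w u (fun _ => 1) = eval_word w u g.
  rewrite -eval_word_mulr //; first by congr eval_word; apply: funext => i; rewrite mul1g.
  by move=> i j; apply: commute1.
by rewrite -eval_word_mulr.
Qed.
End Words.

Section BoundedCentralizerIndex.
Variables (G1 : groupType) (k : nat).
Hypothesis hBFC : forall a : G1, centralizer_index_le k a.
Local Open Scope group_scope.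

Lemma centralizer_signature (L : finType) (e : L -> G1) :
  exists sig : G1 -> {ffun L -> 'I_k},
    forall x y, sig x = sig y -> forall l, commute (x^-1 * y) (e l).
Proof.
have coset a : exists ti : ('I_k -> G1) * (G1 -> 'I_k),
    forall x, in_centralizer a ((ti.1 (ti.2 x))^-1 * x).
  by have [t /choice[i hi]] := hBFC a; exists (t, i).
have [ti hti] := choice coset.
exists (fun x => [ffun l => (ti (e l)).2 x]) => x y sxy l.
move/ffunP/(_ l): sxy; rewrite !ffunE => exy.
have := hti (e l) y; rewrite -exy; have := hti (e l) x.
set z := _.1 _; rewrite /in_centralizer -/(commute _ _) -/(commute _ _) => cx cy.
have -> : x^-1 * y = (z^-1 * x)^-1 * (z^-1 * y).
  by rewrite invgM invgK -mulgA mulVKg.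
by apply/commute_sym/commuteM; [apply/commuteV|]; apply/commute_sym.
Qed.

Lemma subgroup_pow_centralizing_cover n (G : set ('I_n -> G1))
    (L : finType) (e : L -> G1) :
  is_subgroup_pow G ->
  exists r : {ffun 'I_n * L -> 'I_k} -> 'I_n -> G1, (forall phi, G (r phi)) /\
    forall h, G h -> exists phi, forall i l, commute ((r phi i)^-1 * h i) (e l).
Proof.
move=> [G_1 _ _]; have [sig hsig] := centralizer_signature e.
pose sign (h : 'I_n -> G1) := [ffun p : 'I_n * L => sig (h p.1) p.2].
have hrep phi : exists r, G r /\ forall h, G h -> sign h = phi -> sign r = phi.
  have [[h [Gh <-]]|nophi] := pselect (exists h, G h /\ sign h = phi).
    by exists h.
  by exists (fun _ => 1); split=> // h Gh ephi; case: nophi; exists h.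
have [r hr] := choice hrep; exists r; split=> [phi|h Gh]; first by case: (hr phi).
exists (sign h) => i l; apply: hsig; apply/ffunP => l'.
have [_ /(_ h Gh erefl) /ffunP/(_ (i, l'))] := hr (sign h).
by rewrite !ffunE.
Qed.
End BoundedCentralizerIndex.

Section LeftInvariantMeasure.
Variables (R : realType) (G1 : groupType) (n : nat) (G : set ('I_n -> G1))
  (A : set (set ('I_n -> G1))) (mu : set ('I_n -> G1) -> R).
Hypothesis hmu : left_inv_prob_measure G A mu.
Local Open Scope classical_set_scope.
Local Open Scope ring_scope.

Lemma alg_setD X Y : A X -> A Y -> A (Y `\` X).
Proof.
move=> AX AY; suff -> : Y `\` X = G `\` ((G `\` Y) `|` X).
  by apply: (alg_compl hmu); apply: (alg_union hmu) => //; apply: (alg_compl hmu).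
apply/seteqP; split=> h /=.
  by move=> [Yh nXh]; split=> [|[[]|]] //; apply: (alg_sub hmu AY).
by move=> [Gh /not_orP[/not_andP[]// /contrapT]].
Qed.

Lemma mu_set0 : mu set0 = 0.
Proof.
have := mu_additive hmu (alg_set0 hmu) (alg_set0 hmu) (setI0 _).
rewrite setU0; lra.
Qed.

Lemma mu_setUD X Y : A X -> A Y -> mu (X `|` Y) = mu X + mu (Y `\` X).
Proof.
move=> AX AY; rewrite -(mu_additive hmu AX (alg_setD AX AY)) ?setDIK //.
by rewrite setUDr setDv setD0.
Qed.

Lemma le_mu X Y : A X -> A Y -> X `<=` Y -> mu X <= mu Y.
Proof.
move=> AX AY XY; have AYX := alg_setD AX AY.
by rewrite -(setDUK XY) (mu_additive hmu AX AYX (setDIK _ _)) lerDl (mu_ge0 hmu).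
Qed.

Lemma mu_setU_le X Y : A X -> A Y -> mu (X `|` Y) <= mu X + mu Y.
Proof.
move=> AX AY; rewrite mu_setUD // lerD2l.
by apply: le_mu (@subDsetl _ _ _) => //; apply: alg_setD.
Qed.

Lemma mu_compl Y : A Y -> mu (G `\` Y) = 1 - mu Y.
Proof.
move=> AY; have := mu_additive hmu AY (alg_compl hmu AY) (setDIK _ _).
rewrite setDUK ?(mu_total hmu); [lra | exact: (alg_sub hmu)].
Qed.

Lemma translates_cover_ge (T : finType) (t : T -> 'I_n -> G1) Z :
  A Z -> (forall x, G (t x)) -> (forall h, G h -> exists x, ltrans (t x) Z h) ->
  1 <= #|T|%:R * mu Z.
Proof.
move=> AZ Gt cover; pose U := \big[setU/set0]_x ltrans (t x) Z.
have [AU muU] : A U /\ mu U <= \sum_x mu (ltrans (t x) Z).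
  apply: (big_ind2 (fun X r => A X /\ mu X <= r)).
  - by rewrite mu_set0; split=> //; apply: (alg_set0 hmu).
  - move=> X1 r1 X2 r2 [AX1 le1] [AX2 le2]; split; first exact: (alg_union hmu).
    by apply: le_trans (mu_setU_le AX1 AX2) _; apply: lerD.
  - by move=> x _; split=> //; apply: (alg_ltrans hmu).
have GU : G `<=` U.
  by move=> h /cover[x th]; rewrite /U (bigD1 x) //; left.
have := le_mu (alg_setT hmu) AU GU; rewrite (mu_total hmu) => /le_trans; apply.
apply: le_trans muU _; rewrite (eq_bigr (fun _ => mu Z)) ?sumr_const ?mulr_natl //.
by move=> x _; apply: (mu_linv hmu).
Qed.

Lemma complement_translates_cover_le (T : finType) (t : T -> 'I_n -> G1) Y :
  A Y -> (forall x, G (t x)) ->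
  (forall h, G h -> exists x, ltrans (t x) (G `\` Y) h) ->
  mu Y <= 1 - #|T|%:R^-1.
Proof.
move=> AY Gt cover; have := translates_cover_ge (alg_compl hmu AY) Gt cover.
rewrite mu_compl // => le1.
have T_gt0 : 0 < #|T|%:R :> R.
  by rewrite ltr0n lt0n; apply/eqP => T0; move: le1; rewrite T0 mul0r ler10.
rewrite lerBrDl -lerBrDr -[_^-1]mul1r ler_pdivrMr // mulrC; lra.
Qed.
End LeftInvariantMeasure.

Lemma inner_measure_le (R : realType) (T : Type) (A : set (set T))
    (mu : set T -> R) (X : set T) (r : R) :
  A set0 -> (forall Y, A Y -> (Y `<=` X)%classic -> (mu Y <= r)%R) ->
  (inner_measure A mu X <= r)%R.
Proof.
move=> A0 le_r; apply: ge_sup; first by exists (mu set0), set0; split.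
by move=> s [Y [AY YX <-]]; apply: le_r.
Qed.

Section WordFibre.
Variables (R : realType) (G1 : groupType) (k n m : nat).
Hypothesis hBFC : forall a : G1, centralizer_index_le k a.
Variables (G : set ('I_n -> G1)) (A : set (set ('I_n -> G1)))
  (mu : set ('I_n -> G1) -> R).
Hypotheses (hG : is_subgroup_pow G) (hmu : left_inv_prob_measure G A mu).
Variables (w : word n m) (g : 'I_m -> G1) (c : G1).
Local Open Scope classical_set_scope.
Local Open Scope ring_scope.

Lemma word_fibre_measure_le (b : 'I_n -> G1) Y :
  G b -> eval_word w b g <> eval_word w (fun _ => 1%g) g ->
  A Y -> Y `<=` [set h | G h /\ eval_word w h g = c] ->
  mu Y <= 1 - (2 * (k ^ (n * n + m * n))%:R)^-1.
Proof.
move=> Gb bg1 AY YS; have [_ G_mul G_inv] := hG.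
pose e (l : 'I_n + 'I_m) := match l with inl j => b j | inr j => g j end.
have [r [Gr cover]] := subgroup_pow_centralizing_cover hBFC e hG.
pose t (x : {ffun 'I_n * ('I_n + 'I_m) -> 'I_k} * bool) :=
  if x.2 then r x.1 else (fun i => r x.1 i * (b i)^-1)%g.
have -> : 2 * (k ^ (n * n + m * n))%:R =
          #|{: {ffun 'I_n * ('I_n + 'I_m) -> 'I_k} * bool}|%:R :> R.
  rewrite card_prod card_ffun card_prod card_sum !card_ord card_bool natrM mulrC.
  by rewrite mulnDr [(m * n)%N]mulnC.
apply: (complement_translates_cover_le hmu (t := t) AY) => [[phi []]|h Gh] /=.
- exact: Gr.
- by apply: G_mul => //; apply: G_inv.
have [phi cphi] := cover h Gh; pose u i := ((r phi i)^-1 * h i)%g.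
have Gu : G u by apply: G_mul => //; apply: G_inv.
have ru : (fun i => r phi i * u i)%g = h by apply: funext => i; rewrite mulVKg.
have [Yu|nYu] := pselect (Y u); last by exists (phi, true), u.
exists (phi, false), (fun i => b i * u i)%g.
  split; first exact: G_mul.
  move=> /YS[_ ebu]; have [_ eu] := YS u Yu.
  apply: (eval_word_centralized_neq (u := u) _ _ bg1); last by rewrite ebu eu.
    by move=> i j; apply: (cphi i (inl j)).
  by move=> i j; apply: (cphi i (inr j)).
by rewrite -ru; apply: funext => i /=; rewrite -mulgA mulKg.
Qed.
End WordFibre.

Theorem corollary3p4 (R : realType) (G1 : groupType) (k : nat)
  (hk : (1 <= k)%N)
  (hBFC : forall a : G1, centralizer_index_le k a)
  (n m : nat) (G : set ('I_n -> G1)) (hG : is_subgroup_pow G)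
  (A : set (set ('I_n -> G1))) (mu : set ('I_n -> G1) -> R)
  (hmu : left_inv_prob_measure G A mu)
  (w : word n m) (g : 'I_m -> G1) (c : G1)
  (hnot : ~ (forall h, G h -> eval_word w h g = c)) :
  (inner_measure A mu [set h | G h /\ eval_word w h g = c]
     <= 1 - (2 * (k ^ (n * n + m * n))%:R)^-1)%R.
Proof.
apply: inner_measure_le (alg_set0 hmu) _ => Y AY YS.
have [[b Gb bg1]|no_b] :=
  pselect (exists2 b, G b & eval_word w b g <> eval_word w (fun _ => 1%g) g).
  exact: (word_fibre_measure_le hBFC hG hmu Gb bg1 AY YS).
have -> : Y = set0.
  apply/seteqP; split=> // h /YS[Gh ehc]; apply: hnot => h' Gh'.
  have wconst x : G x -> eval_word w x g = eval_word w (fun _ => 1%g) g.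
    by move=> Gx; apply: contrapT => ne; apply: no_b; exists x.
  by rewrite wconst // -(wconst h).
have k1 : (1 <= (k ^ (n * n + m * n))%:R :> R)%R by rewrite ler1n expn_gt0 hk.
rewrite (mu_set0 hmu) subr_ge0 invf_le1; lra.
Qed.
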